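(* Let $G$ be a finite group and $X$ a finite $G$-poset. For all $n\ge 1$ there is an isomorphism of posets $X^{(n)}/G\cong(X'/G)^{(n-1)}$. If $X$ satisfies property (B), then $X^{(n)}/G\cong(X/G)^{(n)}$ for all $n\ge 0$.
   Context: A finite $G$-poset is a finite poset with a right action of $G$ by order-preserving maps. For a poset $Y$, $Y'$ is the poset of non-empty chains of $Y$ ordered by inclusion (with the induced componentwise $G$-action), and $Y^{(n)}$ is the $n$-th iterated subdivision ($Y^{(0)}=Y$, $Y^{(n)}=(Y^{(n-1)})'$). For a $G$-poset $Y$, $Y/G$ is the orbit poset: $\overline{y}\le\overline{z}$ iff some representatives satisfy $y_1\le z_1$. $X$ satisfies property (B) if whenever $\{v_0,\dots,v_n\}$ and $\{v_0^{g_0},\dots,v_n^{g_n}\}$ are both chains of $X$ with $g_i\in G$, there is $g\in G$ with $v_i^{g_i}=v_i^g$ for all $i$. *)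

From mathcomp Require Import all_boot fingroup.
Set Implicit Arguments. Unset Strict Implicit. Unset Printing Implicit Defensive.

Record fposet := FPoset { pcar : finType; ple : rel pcar }.

Definition is_poset (P : fposet) : Prop :=
  [/\ reflexive (@ple P), antisymmetric (@ple P) & transitive (@ple P)].

Definition chainb (P : fposet) (c : {set pcar P}) : bool :=
  [forall x in c, forall y in c, ple x y || ple y x].

(* P' : the poset of non-empty chains ordered by inclusion *)
Definition sd_car (P : fposet) : finType :=
  {c : {set pcar P} | (c != set0) && chainb c}.
Definition sd (P : fposet) : fposet :=
  @FPoset (sd_car P) (fun c d => val c \subset val d).

Record gposet (gT : finGroupType) :=
  GPoset { gpos : fposet; gact : pcar gpos -> gT -> pcar gpos }.

Definition is_Gposet (gT : finGroupType) (X : gposet gT) : Prop :=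
  [/\ is_poset (gpos X),
      forall x, @gact gT X x 1%g = x,
      forall x g h, @gact gT X x (g * h)%g = @gact gT X (@gact gT X x g) h
    & forall x y g, ple x y -> ple (@gact gT X x g) (@gact gT X y g)].

(* The induced (componentwise) action on X': c^g = {x^g | x in c}.
   (insubd only serves to stay in the type of chains; for a G-poset the image
   of a non-empty chain is a non-empty chain, so insubd is the identity there.) *)
Definition gsd (gT : finGroupType) (X : gposet gT) : gposet gT :=
  @GPoset gT (sd (gpos X))
    (fun c g => insubd c [set @gact gT X x g | x in val c]).

Definition gorbit (gT : finGroupType) (X : gposet gT) (x : pcar (gpos X))
  : {set pcar (gpos X)} := [set @gact gT X x g | g : gT].
Definition orb_car (gT : finGroupType) (X : gposet gT) : finType :=
  {A : {set pcar (gpos X)} | [exists x, A == @gorbit gT X x]}.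
Definition quot (gT : finGroupType) (X : gposet gT) : fposet :=
  @FPoset (orb_car X)
    (fun A B => [exists y in val A, exists z in val B, ple y z]).

Definition poset_iso (P Q : fposet) : Prop :=
  exists f : pcar P -> pcar Q, bijective f /\ forall x y, ple x y = ple (f x) (f y).

Definition propB (gT : finGroupType) (X : gposet gT) : Prop :=
  forall (c : {set pcar (gpos X)}) (gs : pcar (gpos X) -> gT),
    chainb c -> chainb [set @gact gT X v (gs v) | v in c] ->
    exists g : gT, forall v, v \in c -> @gact gT X v (gs v) = @gact gT X v g.

From mathcomp Require Import all_boot fingroup.
Set Implicit Arguments. Unset Strict Implicit. Unset Printing Implicit Defensive.
Import GroupScope.

(* Finiteness of G makes orbits rigid: if z <= z^h, then
   z <= z^h <= z^(h^2) <= ... <= z^(h^#[h]) = z, so comparable points of one orbit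
   coincide. Hence X/G is a poset, and X' always satisfies (B): for a chain of chains
   the translation applied to its largest chain works for every smaller chain too.

   For a G-poset Y, sending the orbit of a chain C to the chain of orbits of its points
   gives a monotone map Y'/G -> (Y/G)'. It is onto because a chain of orbits lifts to a
   chain of Y: put a lift of its largest orbit above a lift of the rest. Under (B) it also
   reflects the order: if every orbit met by C is met by D, translating each point of C
   into D separately yields a chain, and (B) replaces these translations by one g with
   C^g included in D. So Y'/G ~ (Y/G)' whenever Y satisfies (B); applied to Y = X^(k)
   for k >= 1, and to Y = X, this gives both isomorphisms by induction on n. *)

Notation gcar X := (pcar (gpos X)).

Lemma chainbP (P : fposet) (c : {set pcar P}) : reflect {in c &, total (@ple P)} (chainb c).
Proof.
apply: (iffP forall_inP) => [c_chain x y xc yc|c_total x xc].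
  by have /forall_inP := c_chain x xc; apply.
by apply/forall_inP => y yc; apply: c_total.
Qed.

Lemma chainb_subset (P : fposet) (c d : {set pcar P}) : chainb c -> d \subset c -> chainb d.
Proof.
by move=> /chainbP c_total /subsetP dc; apply/chainbP => x y /dc xc /dc; apply: c_total.
Qed.

Lemma sd_imset_subproof (P Q : fposet) (f : pcar P -> pcar Q) (c : pcar (sd P)) :
  {homo f : x y / @ple P x y >-> @ple Q x y} ->
  (f @: val c != set0) && chainb (f @: val c).
Proof.
move=> f_homo; case/andP: (valP c) => c_ne /chainbP c_total.
rewrite imset_eq0 c_ne; apply/chainbP => _ _ /imsetP[x xc ->] /imsetP[y yc ->].
by case/orP: (c_total x y xc yc) => /f_homo ->; rewrite ?orbT.
Qed.

Definition sd_map (P Q : fposet) (f : pcar P -> pcar Q)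
    (f_homo : {homo f : x y / @ple P x y >-> @ple Q x y}) (c : pcar (sd P)) : pcar (sd Q) :=
  Sub (f @: val c) (sd_imset_subproof c f_homo).

Lemma sd_poset (P : fposet) : is_poset (sd P).
Proof.
split=> [c|c d /andP[cd dc]|d c e]; [exact: subxx | | exact: subset_trans].
by apply/val_inj/eqP; rewrite eqEsubset; apply/andP.
Qed.

Lemma total_set_max (T : finType) (r : rel T) (S : {set T}) :
  transitive r -> {in S &, total r} -> S != set0 ->
  exists2 m, m \in S & {in S, forall x, r x m}.
Proof.
move=> r_trans r_total /set0Pn[x0 x0S].
have rev_trans : transitive (fun x y => r y x) by move=> y x z /[swap]; apply: r_trans.
have rev_total : {in enum S &, total (fun x y => r y x)}.
  by move=> x y; rewrite !mem_enum => xS yS; rewrite orbC r_total.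
have := sort_sorted_in rev_total (allss (enum S)).
have mem_s x : (x \in sort (fun x y => r y x) (enum S)) = (x \in S) by rewrite mem_sort mem_enum.
case: sort mem_s => [|m s] mem_s; first by rewrite -mem_s in x0S.
move=> /(order_path_min rev_trans) /allP s_le_m.
exists m; first by rewrite -mem_s mem_head.
move=> x; rewrite -mem_s inE => /orP[/eqP ->|]; last exact: s_le_m.
by have := r_total m m; rewrite -!mem_s mem_head orbb; apply.
Qed.

Lemma iso_refl P : poset_iso P P.
Proof. by exists id; split => //; exists id. Qed.

Lemma iso_trans P Q R : poset_iso P Q -> poset_iso Q R -> poset_iso P R.
Proof.
case=> f [f_bij f_ple] [g [g_bij g_ple]]; exists (g \o f); split; first exact: bij_comp.
by move=> x y; rewrite f_ple g_ple.
Qed.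

Lemma embedding_iso (P Q : fposet) (f : pcar P -> pcar Q) :
  antisymmetric (@ple P) -> reflexive (@ple Q) ->
  (forall x y, ple x y = ple (f x) (f y)) -> (forall y, exists x, f x = y) ->
  poset_iso P Q.
Proof.
move=> P_anti Q_refl f_ple f_surj; exists f; split=> //.
have f_inj : injective f by move=> x y fxy; apply: P_anti; rewrite !f_ple fxy Q_refl.
apply: (inj_card_bij f_inj); rewrite -(card_codom f_inj).
by apply/subset_leq_card/subsetP => y _; have [x <-] := f_surj y; apply: codom_f.
Qed.

Lemma iso_sd P Q : poset_iso P Q -> poset_iso (sd P) (sd Q).
Proof.
case=> f [[g fK gK] f_ple].
have f_homo : {homo f : x y / @ple P x y >-> @ple Q x y} by move=> x y; rewrite f_ple.
have g_homo : {homo g : x y / @ple Q x y >-> @ple P x y} by move=> x y; rewrite f_ple !gK.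
have [[_ P_anti _] [Q_refl _ _]] := (sd_poset P, sd_poset Q).
apply: (embedding_iso (f := sd_map f_homo)) => //.
  move=> c d /=; apply/idP/idP; first exact: imsetS.
  by move/(imsetS g); rewrite -!imset_comp !(eq_imset _ fK) !imset_id.
move=> d; exists (sd_map g_homo d); apply: val_inj.
by rewrite !SubK -imset_comp (eq_imset _ gK) imset_id.
Qed.

Lemma iter_sd_iso P Q n : poset_iso P Q -> poset_iso (iter n sd P) (iter n sd Q).
Proof. by move=> PQ; elim: n => [|n IHn] //=; apply: iso_sd. Qed.

Section GPosets.
Variables (gT : finGroupType) (X : gposet gT).
Hypothesis X_Gposet : is_Gposet X.
Implicit Types (x y z : gcar X) (g h : gT).

Lemma gact1 x : gact x 1 = x.
Proof. by case: X_Gposet. Qed.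

Lemma gactM x g h : gact x (g * h) = gact (gact x g) h.
Proof. by case: X_Gposet. Qed.

Lemma gactK g : cancel (@gact _ X ^~ g) (@gact _ X ^~ g^-1).
Proof. by move=> x; rewrite -gactM mulgV gact1. Qed.

Lemma gactKV g : cancel (@gact _ X ^~ g^-1) (@gact _ X ^~ g).
Proof. by move=> x; rewrite -gactM mulVg gact1. Qed.

Lemma gple_refl : reflexive (@ple (gpos X)).
Proof. by case: X_Gposet => -[]. Qed.

Lemma gple_anti : antisymmetric (@ple (gpos X)).
Proof. by case: X_Gposet => -[]. Qed.

Lemma gple_trans : transitive (@ple (gpos X)).
Proof. by case: X_Gposet => -[]. Qed.

Lemma gact_homo g : {homo @gact _ X ^~ g : x y / @ple (gpos X) x y}.
Proof. by case: X_Gposet => _ _ _ homo x y; apply: homo. Qed.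

Lemma gple_gact g x y : ple (gact x g) (gact y g) = ple x y.
Proof. by apply/idP/idP => [/(gact_homo g^-1)|/gact_homo//]; rewrite !gactK. Qed.

Lemma gact_ge_fix z h : ple z (gact z h) -> gact z h = z.
Proof.
move=> le_z_zh; have le_z_zhk k : ple z (gact z (h ^+ k)).
  elim: k => [|k IHk]; first by rewrite expg0 gact1 gple_refl.
  by rewrite expgS gactM (gple_trans IHk) ?gple_gact.
apply: gple_anti; rewrite le_z_zh andbT.
have := le_z_zhk #[h].-1; rewrite -(gple_gact h) -gactM -expgSr prednK ?order_gt0 //.
by rewrite expg_order gact1.
Qed.

Lemma orbit_comparable_eq x a b :
  ple (gact x a) (gact x b) || ple (gact x b) (gact x a) -> gact x a = gact x b.
Proof.
suff le_eq c d : ple (gact x c) (gact x d) -> gact x c = gact x d.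
  by case/orP => /le_eq // /esym.
have -> : gact x d = gact (gact x c) (c^-1 * d) by rewrite -gactM mulKVg.
by move=> /gact_ge_fix ->.
Qed.

Lemma gorbitP x y : reflect (exists g, y = gact x g) (y \in gorbit x).
Proof. by apply: (iffP imsetP) => [[g _ ->]|[g ->]]; exists g. Qed.

Lemma gorbit_gact x g : gorbit (gact x g) = gorbit x.
Proof.
apply/setP => y; apply/gorbitP/gorbitP => -[h ->].
  by exists (g * h); rewrite gactM.
by exists (g^-1 * h); rewrite gactM gactK.
Qed.

Lemma orbit_of_subproof x : [exists y, gorbit x == gorbit y].
Proof. by apply/existsP; exists x. Qed.

Definition orbit_of x : pcar (quot X) := Sub (gorbit x) (orbit_of_subproof x).

Lemma orbit_of_gact x g : orbit_of (gact x g) = orbit_of x.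
Proof. by apply: val_inj; rewrite /= gorbit_gact. Qed.

Lemma orbit_of_eq x y : orbit_of x = orbit_of y -> exists g, y = gact x g.
Proof.
move/(congr1 val) => /= eq_xy; apply/gorbitP; rewrite eq_xy.
by apply/gorbitP; exists 1; rewrite gact1.
Qed.

Lemma orbit_of_surj (A : pcar (quot X)) : exists x, A = orbit_of x.
Proof.
by case: A => A A_orbit; case/existsP: (A_orbit) => x /eqP A_x; exists x; apply: val_inj.
Qed.

Lemma le_orbit_ofP x y :
  reflect (exists g, ple (gact x g) y) (ple (orbit_of x) (orbit_of y)).
Proof.
apply: (iffP existsP) => [[_ /andP[/gorbitP[a ->]]]|[g le_xg_y]].
  case/existsP => _ /andP[/gorbitP[b ->]] le_ab.
  by exists (a * b^-1); rewrite gactM -(gple_gact b) gactKV.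
exists (gact x g); rewrite /= (introT (gorbitP _ _)) //=; last by exists g.
apply/existsP; exists y; rewrite le_xg_y andbT.
by apply/gorbitP; exists 1; rewrite gact1.
Qed.

Lemma le_orbit_of x y : ple x y -> ple (orbit_of x) (orbit_of y).
Proof. by move=> le_xy; apply/le_orbit_ofP; exists 1; rewrite gact1. Qed.

Lemma quot_trans : transitive (@ple (quot X)).
Proof.
move=> B A C; have [x ->] := orbit_of_surj A; have [y ->] := orbit_of_surj B.
have [z ->] := orbit_of_surj C.
move=> /le_orbit_ofP[g le_xg_y] /le_orbit_ofP[h le_yh_z]; apply/le_orbit_ofP.
by exists (g * h); rewrite gactM (gple_trans _ le_yh_z) ?gple_gact.
Qed.

Lemma quot_anti : antisymmetric (@ple (quot X)).
Proof.
move=> A B; have [x ->] := orbit_of_surj A; have [y ->] := orbit_of_surj B.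
case/andP=> /le_orbit_ofP[a le_xa_y] /le_orbit_ofP[b le_yb_x].
have le_xab_yb : ple (gact x (a * b)) (gact y b) by rewrite gactM gple_gact.
have x_fix : gact x (a * b) = x.
  rewrite -[RHS](gact1 x); apply: orbit_comparable_eq.
  by rewrite gact1 (gple_trans le_xab_yb).
rewrite -(orbit_of_gact y b); congr orbit_of; apply: gple_anti.
by rewrite le_yb_x andbT -{1}x_fix.
Qed.

Lemma lift_above (C : {set gcar X}) z :
  chainb C -> {in C, forall x, ple (orbit_of x) (orbit_of z)} ->
  exists2 z', orbit_of z' = orbit_of z & {in C, forall x, ple x z'}.
Proof.
move=> /chainbP C_total C_below.
have [->|C_ne] := eqVneq C set0; first by exists z => // x; rewrite inE.
have [m mC m_max] := total_set_max gple_trans C_total C_ne.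
have /le_orbit_ofP[g le_mg_z] := C_below m mC.
exists (gact z g^-1); first exact: orbit_of_gact.
by move=> x xC; apply: gple_trans (m_max x xC) _; rewrite -(gple_gact g) gactKV.
Qed.

Lemma lift_quot_chain (S : {set pcar (quot X)}) :
  chainb S -> exists2 C : {set gcar X}, chainb C & orbit_of @: C = S.
Proof.
move Sn : #|S| => n; elim: n S Sn => [|n IHn] S Sn S_chain.
  exists set0; first by apply/chainbP => x; rewrite inE.
  by move/eqP: Sn; rewrite cards_eq0 imset0 => /eqP.
have /chainbP S_total := S_chain.
have S_ne : S != set0 by rewrite -card_gt0 Sn.
have [M MS M_max] := total_set_max quot_trans S_total S_ne.
have [||C C_chain C_S] := IHn (S :\ M).
- by move: Sn; rewrite (cardsD1 M) MS => -[].
- by apply: chainb_subset S_chain _; apply: subsetDl.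
have [z Mz] := orbit_of_surj M.
have [|z' z'M le_C_z'] := @lift_above C z C_chain.
  move=> x xC; rewrite -Mz; apply: M_max.
  by have := imset_f orbit_of xC; rewrite C_S => /setD1P[].
exists (z' |: C); last by rewrite imsetU1 C_S z'M -Mz setD1K.
have /chainbP C_total := C_chain.
apply/chainbP => a b /setU1P[->|aC] /setU1P[->|bC].
- by rewrite /total gple_refl.
- by rewrite /total le_C_z' ?orbT.
- by rewrite /total le_C_z'.
- exact: C_total.
Qed.

Lemma gact_in_chain_image (M : {set gcar X}) x a b :
  chainb M -> x \in M -> gact x a \in [set gact y b | y in M] -> gact x a = gact x b.
Proof.
move=> /chainbP M_total xM /imsetP[y yM xa_yb].
by apply: orbit_comparable_eq; rewrite xa_yb !gple_gact orbC; apply: M_total.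
Qed.

Lemma val_gsd (C : gcar (gsd X)) g : val (gact C g) = [set gact x g | x in val C].
Proof. by rewrite /= val_insubd (sd_imset_subproof C (gact_homo g)). Qed.

Lemma gsd_Gposet : is_Gposet (gsd X).
Proof.
split=> [|C|C g h|C D g]; first exact: sd_poset.
- by apply: val_inj; rewrite val_gsd (eq_imset _ gact1) imset_id.
- by apply: val_inj; rewrite !val_gsd -imset_comp; apply: eq_imset => x; rewrite /= gactM.
- by rewrite /= !val_gsd; apply: imsetS.
Qed.

Lemma gsd_propB : propB (gsd X).
Proof.
move=> c gs c_chain c_gs_chain.
have [->|c_ne] := eqVneq c set0; first by exists 1 => C; rewrite inE.
have [_ _ sd_trans] := sd_poset (gpos X).
have /chainbP c_total := c_chain.
have [M Mc M_max] := total_set_max sd_trans c_total c_ne.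
exists (gs M) => C Cc; apply: val_inj; rewrite !val_gsd; apply: eq_in_imset => x xC.
have CM : val C \subset val M := M_max C Cc.
have xM := subsetP CM x xC.
case/andP: (valP M) => _ M_chain.
have /chainbP gs_total := c_gs_chain.
have := gs_total _ _ (imset_f _ Cc) (imset_f _ Mc).
rewrite /total /= !val_gsd => /orP[/subsetP CM_sub | /subsetP MC_sub].
  by apply: gact_in_chain_image M_chain xM _; apply/CM_sub/imset_f.
apply/esym/(gact_in_chain_image M_chain xM).
by apply: (subsetP (imsetS _ CM)); apply/MC_sub/imset_f.
Qed.

End GPosets.

Arguments orbit_of {gT X} x.

Section QuotientOfSubdivision.
Variables (gT : finGroupType) (Y : gposet gT).
Hypothesis Y_Gposet : is_Gposet Y.

Definition orbit_chain (C : gcar (gsd Y)) : {set pcar (quot Y)} := orbit_of @: val C.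

(* The union over the whole orbit avoids choosing a representative chain. *)
Definition quot_chain (A : pcar (quot (gsd Y))) : {set pcar (quot Y)} :=
  \bigcup_(C in val A) orbit_chain C.

Lemma orbit_chain_gact C g : orbit_chain (gact C g) = orbit_chain C.
Proof.
rewrite /orbit_chain val_gsd // -imset_comp.
by apply: eq_imset => x; apply: orbit_of_gact.
Qed.

Lemma quot_chain_orbit_of C : quot_chain (orbit_of C) = orbit_chain C.
Proof.
apply/setP => A; apply/bigcupP/idP => [[D /gorbitP[g ->]]|AC].
  by rewrite orbit_chain_gact.
by exists C => //; apply/gorbitP; exists 1; rewrite gact1 //; apply: gsd_Gposet.
Qed.

Lemma quot_chain_subproof A : (quot_chain A != set0) && chainb (quot_chain A).
Proof.
have [C ->] := orbit_of_surj A; rewrite quot_chain_orbit_of.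
exact: sd_imset_subproof C (le_orbit_of Y_Gposet).
Qed.

Definition quot_chain_sd (A : pcar (quot (gsd Y))) : pcar (sd (quot Y)) :=
  Sub (quot_chain A) (quot_chain_subproof A).

Lemma quot_chain_sd_surj S : exists A, quot_chain_sd A = S.
Proof.
case/andP: (valP S) => S_ne S_chain.
have [C C_chain C_S] := lift_quot_chain Y_Gposet S_chain.
have C_sd : (C != set0) && chainb C by rewrite C_chain andbT -(imset_eq0 orbit_of) C_S.
exists (orbit_of (Sub C C_sd : gcar (gsd Y))); apply: val_inj.
by rewrite SubK quot_chain_orbit_of /orbit_chain SubK.
Qed.

Hypothesis Y_propB : propB Y.

Lemma orbit_chain_subset C D :
  orbit_chain C \subset orbit_chain D -> exists g, val (gact C g) \subset val D.
Proof.
move=> /subsetP CD.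
pose gs x := odflt 1 [pick g | gact x g \in val D].
have gsD x : x \in val C -> gact x (gs x) \in val D.
  move=> xC; have /imsetP[y yD /(orbit_of_eq Y_Gposet)[g y_xg]] := CD _ (imset_f orbit_of xC).
  by rewrite /gs; case: pickP => [//|/(_ g)]; rewrite -y_xg yD.
case/andP: (valP C) => _ C_chain; case/andP: (valP D) => _ D_chain.
have gs_chain : chainb [set gact x (gs x) | x in val C].
  by apply: chainb_subset D_chain _; apply/subsetP => _ /imsetP[x xC ->]; apply: gsD.
have [g gs_g] := Y_propB C_chain gs_chain.
exists g; rewrite val_gsd //; apply/subsetP => _ /imsetP[x xC ->].
by rewrite -gs_g // gsD.
Qed.

Lemma le_quot_chain_sd A B : ple A B = ple (quot_chain_sd A) (quot_chain_sd B).
Proof.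
have [C ->] := orbit_of_surj A; have [D ->] := orbit_of_surj B.
rewrite [in RHS]/= !quot_chain_orbit_of; apply/idP/idP.
  case/(le_orbit_ofP (gsd_Gposet Y_Gposet)) => g CgD.
  by rewrite -(orbit_chain_gact C g); apply: imsetS.
by case/orbit_chain_subset => g CgD; apply/(le_orbit_ofP (gsd_Gposet Y_Gposet)); exists g.
Qed.

Lemma quot_gsd_iso : poset_iso (quot (gsd Y)) (sd (quot Y)).
Proof.
have [sd_refl _ _] := sd_poset (quot Y).
exact: embedding_iso (quot_anti (gsd_Gposet Y_Gposet)) sd_refl le_quot_chain_sd
  quot_chain_sd_surj.
Qed.

End QuotientOfSubdivision.

Lemma iter_gsd_Gposet gT (X : gposet gT) n : is_Gposet X -> is_Gposet (iter n (@gsd gT) X).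
Proof. by move=> X_Gposet; elim: n => //= n; apply: gsd_Gposet. Qed.

Theorem corollary2p10 (gT : finGroupType) (X : gposet gT) :
  is_Gposet X ->
  (forall n : nat, 1 <= n ->
     poset_iso (quot (iter n (@gsd gT) X)) (iter n.-1 sd (quot (gsd X)))) /\
  (propB X -> forall n : nat,
     poset_iso (quot (iter n (@gsd gT) X)) (iter n sd (quot X))).
Proof.
move=> X_Gposet.
have iso_quot_iter m :
    poset_iso (quot (iter m.+1 (@gsd gT) X)) (iter m sd (quot (gsd X))).
  elim: m => [|m IHm]; first exact: iso_refl.
  have Xm_Gposet := iter_gsd_Gposet m X_Gposet.
  apply: iso_trans (iso_sd IHm).
  exact: quot_gsd_iso (gsd_Gposet Xm_Gposet) (gsd_propB Xm_Gposet).
split; first by case=> [//|m] _; apply: iso_quot_iter.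
move=> X_propB [|m]; first exact: iso_refl.
apply: iso_trans (iso_quot_iter m) _; rewrite iterSr.
exact/iter_sd_iso/quot_gsd_iso.
Qed.
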